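(* Let $(\mathbb{X},\oplus,\otimes,\mathbb{0},\mathbb{1})$ be a linearly ordered, algebraically complete idempotent semifield, let $\bm{A}_1,\ldots,\bm{A}_m\in\mathbb{X}^{n\times n}$ be reciprocal matrices (i.e. $\bm{A}_i^{-}=\bm{A}_i$) and $w_1,\ldots,w_m\in\mathbb{X}$ scalars such that $\bm{B}=w_1\bm{A}_1\oplus\cdots\oplus w_m\bm{A}_m$ has no zero entries. Let $\mu$ be the spectral radius of $\bm{B}$ and $\bm{B}_{\mu}=\mu^{-1}\bm{B}$. Consider the problem of minimizing $\max_{1\le i\le m} w_i\, d(\bm{A}_i,\bm{x}\bm{x}^{-})$ (i.e. $\bigoplus_{i=1}^m w_i d(\bm{A}_i,\bm{x}\bm{x}^{-})$) over all regular vectors $\bm{x}\in\mathbb{X}^n$. Then the minimum value equals $\mu$, and the set of all solutions is $\{\bm{x}=\bm{B}_{\mu}^{\ast}\bm{u}:\bm{u}\in\mathbb{X}^n,\ \bm{u}\ne\bm{0}\}$.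
   Context: An idempotent semifield is a set $\mathbb{X}$ with associative, commutative operations $\oplus$ (addition) and $\otimes$ (multiplication, usually omitted in writing) with neutral elements $\mathbb{0}$ and $\mathbb{1}$, multiplication distributing over addition, idempotent addition ($x\oplus x=x$), and every nonzero $x$ having an inverse $x^{-1}$ with $xx^{-1}=\mathbb{1}$. It is assumed linearly ordered by the order $x\le y \iff x\oplus y=y$, and algebraically complete: $x^p=a$ is solvable for every $a$ and integer $p>0$, so rational powers are defined. Matrix and vector operations (including scalar multiplication) use the usual formulas with $\oplus,\otimes$ in place of $+,\times$; $\bm{0}$ is the zero vector; a vector is regular if it has no zero entries. For a nonzero column vector $\bm{x}=(x_i)$, $\bm{x}^{-}$ is the row vector with entries $x_i^{-1}$ if $x_i\ne\mathbb{0}$ and $\mathbb{0}$ otherwise. For a nonzero matrix $\bm{A}=(a_{ij})$, $\bm{A}^{-}=(a^{-}_{ij})$ with $a^{-}_{ij}=a_{ji}^{-1}$ if $a_{ji}\neq\mathbb{0}$ and $\mathbb{0}$ otherwise. The trace is $\mathrm{tr}\,\bm{A}=a_{11}\oplus\cdots\oplus a_{nn}$. The distance between square matrices is $d(\bm{A},\bm{B})=\mathrm{tr}(\bm{B}^{-}\bm{A})\oplus\mathrm{tr}(\bm{A}^{-}\bm{B})$. $\bm{I}$ is the identity matrix, $\bm{A}^0=\bm{I}$, $\bm{A}^p=\bm{A}^{p-1}\bm{A}$. The spectral radius of $\bm{A}$ of order $n$ is $\lambda=\bigoplus_{k=1}^{n}\bigoplus_{1\le i_1,\ldots,i_k\le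 n}(a_{i_1i_2}a_{i_2i_3}\cdots a_{i_ki_1})^{1/k}$. For a square matrix $\bm{M}$ of order $n$, $\bm{M}^{\ast}=\bm{I}\oplus\bm{M}\oplus\cdots\oplus\bm{M}^{n-1}$. *)

From mathcomp Require Import all_boot.
Set Warnings "-notation-overridden".
Set Implicit Arguments. Unset Strict Implicit. Unset Printing Implicit Defensive.

(* A linearly ordered, algebraically complete idempotent semifield.
   [sinv 0 = 0] is a harmless convention (inverse of 0 is not defined in the
   paper); [sroot k a] is a chosen solution of x^k = a (algebraic completeness);
   it is in fact unique in a linearly ordered idempotent semifield. *)
Record idem_semifield := IdemSemifield {
  car :> Type;
  sadd : car -> car -> car;
  smul : car -> car -> car;
  szero : car;
  sone : car;
  sinv : car -> car;
  sroot : nat -> car -> car;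
  saddA : forall x y z, sadd x (sadd y z) = sadd (sadd x y) z;
  saddC : forall x y, sadd x y = sadd y x;
  sadd0 : forall x, sadd szero x = x;
  smulA : forall x y z, smul x (smul y z) = smul (smul x y) z;
  smulC : forall x y, smul x y = smul y x;
  smul1 : forall x, smul sone x = x;
  smul0 : forall x, smul szero x = szero;
  smulDl : forall x y z, smul (sadd x y) z = sadd (smul x z) (smul y z);
  saddxx : forall x, sadd x x = x;
  sone_neq0 : sone <> szero;
  smulV : forall x, x <> szero -> smul x (sinv x) = sone;
  sinv0 : sinv szero = szero;
  slinear : forall x y, sadd x y = x \/ sadd x y = y;
  sroot_spec : forall k a, 0 < k -> iter k (smul (sroot k a)) sone = a
}.

Section Defs.
Variable X : idem_semifield.

Local Notation "x (+) y" := (sadd x y) (at level 50, left associativity).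
Local Notation "x (x) y" := (smul x y) (at level 40, left associativity).

Definition sle (x y : X) : Prop := x (+) y = y.

Definition spow (x : X) (p : nat) : X := iter p (smul x) (sone X).

Definition vec n := 'I_n -> X.
Definition mat n := 'I_n -> 'I_n -> X.

Definition mxmul n (A B : mat n) : mat n :=
  fun i j => \big[@sadd X/szero X]_(k < n) (A i k (x) B k j).
Definition mxvmul n (A : mat n) (u : vec n) : vec n :=
  fun i => \big[@sadd X/szero X]_(k < n) (A i k (x) u k).
Definition mxadd n (A B : mat n) : mat n := fun i j => A i j (+) B i j.
Definition mxscale n (c : X) (A : mat n) : mat n := fun i j => c (x) A i j.
Definition mxzero n : mat n := fun _ _ => szero X.
Definition mxid n : mat n := fun i j => if i == j then sone X else szero X.
Definition mxpow n (A : mat n) (p : nat) : mat n := iter p (fun M => mxmul M A) (@mxid n).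

(* A^- : (A^-)_{ij} = a_{ji}^{-1} (0 if a_{ji} = 0, via sinv0) *)
Definition mxconj n (A : mat n) : mat n := fun i j => sinv (A j i).
(* x x^- : entries x_i x_j^{-1} (0 if x_j = 0, via sinv0) *)
Definition outer_conj n (x : vec n) : mat n := fun i j => x i (x) sinv (x j).

Definition mxtr n (A : mat n) : X := \big[@sadd X/szero X]_(i < n) A i i.
Definition mxdist n (A B : mat n) : X :=
  mxtr (mxmul (mxconj B) A) (+) mxtr (mxmul (mxconj A) B).

Definition mxstar n (M : mat n) : mat n :=
  fun i j => \big[@sadd X/szero X]_(p < n) mxpow M p i j.

Definition cycle_prod n k (A : mat n) (s : {ffun 'I_k -> 'I_n}) : X :=
  \big[@smul X/sone X]_(j < k) A (s j) (s (ordS j)).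

Definition spec_rad n (A : mat n) : X :=
  \big[@sadd X/szero X]_(1 <= k < n.+1)
     \big[@sadd X/szero X]_(s : {ffun 'I_k -> 'I_n}) sroot k (cycle_prod A s).

Definition regular n (x : vec n) : Prop := forall i, x i <> szero X.
Definition vec_nonzero n (u : vec n) : Prop := ~ (forall i, u i = szero X).
Definition reciprocal n (A : mat n) : Prop := forall i j, mxconj A i j = A i j.

End Defs.

(* The weighted objective is the form x^- B x: by reciprocity both traces in
   d(A_l, x x^-) are the same sum, which idempotency merges.  Every entry obeys
   b_ij <= x_i x_j^-1 (x^- B x), so along any cycle the x's cancel and the cycle
   mean of B is at most x^- B x; hence mu <= x^- B x.  Moreover x^- B x <= mu
   exactly when B_mu x <= x.  All cycles of B_mu weigh at most 1, so removing
   cycles bounds every path weight of B_mu by an entry of B_mu^*; therefore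
   every B_mu^* u satisfies B_mu x <= x, and every x with B_mu x <= x is fixed
   by B_mu^*. *)
From HB Require Import structures.
From mathcomp Require Import all_boot zify.
From Stdlib Require Import Classical.
Set Implicit Arguments. Unset Strict Implicit. Unset Printing Implicit Defensive.
Set Warnings "-notation-overridden -redundant-canonical-projection".

Lemma not_uniq_decomp (T : eqType) (l : seq T) : ~~ uniq l ->
  exists l1 v l2 l3, l = l1 ++ v :: l2 ++ v :: l3 /\ uniq (v :: l2).
Proof.
elim: l => // a l IH /=; rewrite negb_and negbK.
case: (boolP (uniq l)) => [ul | /IH[l1 [v [l2 [l3 [-> ul2]]]]] _]; last first.
  by exists (a :: l1), v, l2, l3.
rewrite orbF => al; case/splitPr: al ul => l2 l3 ul.
exists [::], a, l2, l3; split => //.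
move: ul; rewrite cat_uniq /= => /and3P[ul2 /norP[al2 _] _].
by rewrite ul2 andbT.
Qed.

Section Semifield.
Variable X : idem_semifield.
Local Notation "0s" := (szero X).
Local Notation "1s" := (sone X).
Local Notation sadd := (@sadd X).
Local Notation smul := (@smul X).

HB.instance Definition _ :=
  Monoid.isComLaw.Build X 0s sadd (@saddA X) (@saddC X) (@sadd0 X).
HB.instance Definition _ :=
  Monoid.isComLaw.Build X 1s smul (@smulA X) (@smulC X) (@smul1 X).

Lemma sadd0r (x : X) : sadd x 0s = x. Proof. by rewrite saddC sadd0. Qed.
Lemma smul1r (x : X) : smul x 1s = x. Proof. by rewrite smulC smul1. Qed.
Lemma smul0r (x : X) : smul x 0s = 0s. Proof. by rewrite smulC smul0. Qed.
Lemma smulDr (x y z : X) : smul z (sadd x y) = sadd (smul z x) (smul z y).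
Proof. by rewrite smulC smulDl !(smulC z). Qed.
Lemma smulCA (a b c : X) : smul a (smul b c) = smul b (smul a c).
Proof. by rewrite !smulA (smulC a). Qed.
Lemma smulAC (a b c : X) : smul (smul a b) c = smul (smul a c) b.
Proof. by rewrite -!smulA (smulC b). Qed.
Lemma smulVl (x : X) : x <> 0s -> smul (sinv x) x = 1s.
Proof. by move=> x0; rewrite smulC smulV. Qed.

Lemma smul_eq0 (x y : X) : smul x y = 0s -> x = 0s \/ y = 0s.
Proof.
move=> xy0; case: (classic (x = 0s)) => x0; [by left | right].
by rewrite -[y]smul1 -(smulVl x0) -smulA xy0 smul0r.
Qed.

Lemma smul_neq0 (x y : X) : x <> 0s -> y <> 0s -> smul x y <> 0s.
Proof. by move=> x0 y0 /smul_eq0[]. Qed.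

Lemma sinv_neq0 (x : X) : x <> 0s -> sinv x <> 0s.
Proof. by move=> x0 ix0; apply: (@sone_neq0 X); rewrite -(smulV x0) ix0 smul0r. Qed.

Lemma sinv_uniq (a b : X) : smul a b = 1s -> b = sinv a.
Proof.
move=> ab1; have a0 : a <> 0s by move=> a0; apply: (@sone_neq0 X); rewrite -ab1 a0 smul0.
by rewrite -[b]smul1 -(smulVl a0) -smulA ab1 smul1r.
Qed.

Lemma sinvK (x : X) : sinv (sinv x) = x.
Proof.
case: (classic (x = 0s)) => [-> | x0]; first by rewrite !sinv0.
by apply/esym/sinv_uniq; rewrite smulVl.
Qed.

Lemma sinvM (x y : X) : sinv (smul x y) = smul (sinv x) (sinv y).
Proof.
case: (classic (x = 0s)) => [-> | x0]; first by rewrite smul0 sinv0 smul0.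
case: (classic (y = 0s)) => [-> | y0]; first by rewrite smul0r sinv0 smul0r.
apply/esym/sinv_uniq.
by rewrite -smulA (smulCA y) (smulV y0) smul1r (smulV x0).
Qed.

Lemma sle_refl (x : X) : sle x x. Proof. exact: saddxx. Qed.
Lemma sle_trans (y x z : X) : sle x y -> sle y z -> sle x z.
Proof. by rewrite /sle => xy yz; rewrite -yz saddA xy. Qed.
Lemma sle_anti (x y : X) : sle x y -> sle y x -> x = y.
Proof. by rewrite /sle => xy yx; rewrite -yx saddC xy. Qed.
Lemma sle_total (x y : X) : sle x y \/ sle y x.
Proof. by case: (slinear x y) => xy; [right; rewrite /sle saddC | left]. Qed.
Lemma sle0x (x : X) : sle 0s x. Proof. exact: sadd0. Qed.
Lemma sle_addl (x y : X) : sle x (sadd x y).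
Proof. by rewrite /sle saddA saddxx. Qed.
Lemma sle_add_lub (x y z : X) : sle x z -> sle y z -> sle (sadd x y) z.
Proof. by rewrite /sle => xz yz; rewrite -saddA yz xz. Qed.
Lemma sle_mul2l (z x y : X) : sle x y -> sle (smul z x) (smul z y).
Proof. by rewrite /sle => xy; rewrite -smulDr xy. Qed.
Lemma sle_mul2r (z x y : X) : sle x y -> sle (smul x z) (smul y z).
Proof. by move=> xy; rewrite !(smulC _ z); apply: sle_mul2l. Qed.
Lemma sle_mul2 (a b c d : X) : sle a b -> sle c d -> sle (smul a c) (smul b d).
Proof. by move=> ab cd; apply: sle_trans (sle_mul2r _ ab) (sle_mul2l _ cd). Qed.
Lemma sle_neq0 (x y : X) : sle x y -> x <> 0s -> y <> 0s.
Proof. by rewrite /sle => xy x0 y0; apply: x0; move: xy; rewrite y0 sadd0r. Qed.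

Section BigSum.
Variables (I : Type) (r : seq I) (P : pred I).

Lemma big_sle (F : I -> X) c :
  (forall i, P i -> sle (F i) c) -> sle (\big[sadd/0s]_(i <- r | P i) F i) c.
Proof. by move=> Fc; elim/big_ind: _ => //; [apply: sle0x | move=> *; apply: sle_add_lub]. Qed.

Lemma prod_sle2 (F G : I -> X) : (forall i, P i -> sle (F i) (G i)) ->
  sle (\big[smul/1s]_(i <- r | P i) F i) (\big[smul/1s]_(i <- r | P i) G i).
Proof. by move=> FG; elim/big_ind2: _ => //; [apply: sle_refl | move=> *; apply: sle_mul2]. Qed.

Lemma big_attained (F : I -> X) :
  \big[sadd/0s]_(i <- r | P i) F i = 0s \/
  exists2 i, P i & \big[sadd/0s]_(i <- r | P i) F i = F i.
Proof.
elim/big_ind: _ => [| x y | i Pi]; [by left | | by right; exists i].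
by case: (slinear x y) => ->.
Qed.

Lemma big_smulr (F : I -> X) c :
  smul c (\big[sadd/0s]_(i <- r | P i) F i) = \big[sadd/0s]_(i <- r | P i) smul c (F i).
Proof. by elim/big_rec2: _ => [| i y1 y2 _ <-]; rewrite ?smul0r ?smulDr. Qed.

Lemma big_smull (F : I -> X) c :
  smul (\big[sadd/0s]_(i <- r | P i) F i) c = \big[sadd/0s]_(i <- r | P i) smul (F i) c.
Proof. by rewrite smulC big_smulr; apply: eq_bigr => i _; apply: smulC. Qed.

End BigSum.

Lemma sle_big (I : eqType) (r : seq I) (P : pred I) (F : I -> X) i :
  i \in r -> P i -> sle (F i) (\big[sadd/0s]_(j <- r | P j) F j).
Proof.
move=> ir Pi; rewrite (big_rem i ir) Pi; exact: sle_addl.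
Qed.

Lemma sle_bigT (I : finType) (F : I -> X) i : sle (F i) (\big[sadd/0s]_j F j).
Proof. by apply: sle_big; rewrite ?mem_index_enum. Qed.

Lemma sle_big_seq (I : eqType) (r : seq I) (P : pred I) (F : I -> X) c :
  (forall i, i \in r -> P i -> sle (F i) c) -> sle (\big[sadd/0s]_(i <- r | P i) F i) c.
Proof. by move=> Fc; rewrite big_seq_cond; apply: big_sle => i /andP[]; apply: Fc. Qed.

Lemma spowS (x : X) k : spow x k.+1 = smul x (spow x k). Proof. by []. Qed.

Lemma spow1 k : spow 1s k = 1s.
Proof. by elim: k => // k IH; rewrite spowS IH smul1. Qed.

Lemma spowM (x y : X) k : spow (smul x y) k = smul (spow x k) (spow y k).
Proof. by elim: k => [|k IH]; rewrite ?smul1 // !spowS IH -!smulA (smulCA y). Qed.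

Lemma sle_spow (x y : X) k : sle x y -> sle (spow x k) (spow y k).
Proof. by move=> xy; elim: k => [|k IH]; [apply: sle_refl | apply: sle_mul2]. Qed.

Lemma spow_sle_cancel (x y : X) k : 0 < k -> sle (spow x k) (spow y k) -> sle x y.
Proof.
move=> k0 xyk; case: (sle_total x y) => // yx.
have xkyk : spow x k = spow y k by apply: sle_anti => //; apply: sle_spow.
case: (classic (x = 0s)) => [x0 | x0].
  by move: yx; rewrite /sle x0 sadd0r => ->; apply: sle_refl.
pose t := smul y (sinv x).
have t_le1 : sle t 1s by rewrite /t -(smulV x0); apply: sle_mul2r.
have tk1 : spow t k = 1s by rewrite /t spowM -xkyk -spowM smulV // spow1.
(* [t <= 1] and [t^k = 1] force [t = 1], since [t^(k-1) <= 1]. *)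
have one_le_t : sle 1s t.
  clear -tk1 k0 t_le1; case: k k0 tk1 => // k _ <-; rewrite spowS -[t in sle _ t]smul1r.
  by apply: sle_mul2l; rewrite -(spow1 k); apply: sle_spow.
have -> : y = smul t x by rewrite /t -smulA smulVl // smul1r.
by rewrite (sle_anti t_le1 one_le_t) smul1; apply: sle_refl.
Qed.

Section PathWeights.
Variables (n : nat) (M : mat X n).

Fixpoint path_weight (a : 'I_n) (l : seq 'I_n) : X :=
  if l is b :: l' then smul (M a b) (path_weight b l') else 1s.

Lemma path_weight_cat a l1 l2 :
  path_weight a (l1 ++ l2) = smul (path_weight a l1) (path_weight (last a l1) l2).
Proof. by elim: l1 a => [|b l1 IH] a /=; rewrite ?smul1 // IH smulA. Qed.

Lemma path_weight_rcons a l b :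
  path_weight a (rcons l b) = smul (path_weight a l) (M (last a l) b).
Proof. by rewrite -cats1 path_weight_cat /= smul1r. Qed.

Lemma path_weight_big a l :
  path_weight a l = \big[smul/1s]_(j < size l) M (nth a (a :: l) j) (nth a l j).
Proof.
elim: l a => [|b l IH] a /=; first by rewrite big_ord0.
rewrite big_ord_recl IH; congr smul; apply: eq_bigr => j _ /=.
rewrite add0n (set_nth_default a b (ltn_ord j)); congr M.
by rewrite (set_nth_default a b) //= ltnS ltnW.
Qed.

Lemma mxpowS p : mxpow M p.+1 = mxmul (mxpow M p) M. Proof. by []. Qed.

Lemma mxpow_path p i j : mxpow M p i j = 0s \/
  exists l, [/\ size l = p, last i l = j & mxpow M p i j = path_weight i l].
Proof.
elim: p j => [|p IH] j.
  rewrite /mxpow /= /mxid; case: eqP => [<- | _]; [by right; exists [::] | by left].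
rewrite mxpowS /mxmul.
have [-> | [k _ ->]] := big_attained (index_enum 'I_n) xpredT
  (fun k => smul (mxpow M p i k) (M k j)); first by left.
have [-> | [l [<- lk ->]]] := IH k; first by left; rewrite smul0.
by right; exists (rcons l j); rewrite size_rcons last_rcons path_weight_rcons lk.
Qed.

Lemma path_weight_le_mxpow a l :
  sle (path_weight a l) (mxpow M (size l) a (last a l)).
Proof.
elim/last_ind: l => [|l b IH].
  by rewrite /mxpow /= /mxid eqxx; apply: sle_refl.
rewrite path_weight_rcons size_rcons last_rcons mxpowS /mxmul.
apply: sle_trans (sle_bigT (fun k => smul (mxpow M (size l) a k) (M k b)) (last a l)).
exact: sle_mul2r.
Qed.

Lemma path_weight_cycle v l :
  path_weight v (rcons l v) = cycle_prod M [ffun j : 'I_(size l).+1 => nth v (v :: l) j].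
Proof.
rewrite path_weight_big /cycle_prod size_rcons; apply: eq_bigr => j _.
rewrite !ffunE -[v :: rcons l v]/(rcons (v :: l) v) !nth_rcons ltn_ord /=.
case: ltnP => jl; first by rewrite modn_small.
have -> : (j : nat) = size l by apply/eqP; rewrite eqn_leq jl -ltnS ltn_ord.
by rewrite eqxx modnn.
Qed.

Hypothesis cycles_le1 : forall k (s : {ffun 'I_k -> 'I_n}), 0 < k -> k <= n ->
  sle (cycle_prod M s) 1s.

Lemma elementary_cycle_le1 v l : uniq (v :: l) -> sle (path_weight v (rcons l v)) 1s.
Proof.
move=> vl; rewrite path_weight_cycle; apply: cycles_le1 => //.
rewrite -[_.+1]/(size (v :: l)) -(card_uniqP vl).
by apply: leq_trans (max_card _) _; rewrite card_ord.
Qed.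

Lemma path_weight_drop_cycle a l1 v l2 l3 : last a l1 = v -> uniq (v :: l2) ->
  sle (path_weight a (l1 ++ rcons l2 v ++ l3)) (path_weight a (l1 ++ l3)).
Proof.
move=> l1v vl2; rewrite !path_weight_cat l1v last_rcons.
apply: sle_mul2l; rewrite -[t in sle _ t]smul1.
exact: sle_mul2r (elementary_cycle_le1 vl2).
Qed.

Lemma long_path_has_cycle (a : 'I_n) l : n <= size l ->
  exists l1 v l2 l3, [/\ l = l1 ++ rcons l2 v ++ l3, last a l1 = v & uniq (v :: l2)].
Proof.
move=> nl; have : ~~ uniq (a :: l).
  apply/negP => al; move: (max_card (mem (a :: l))).
  by rewrite (card_uniqP al) card_ord /= ltnNge nl.
case/not_uniq_decomp=> [[|b l1] [v [l2 [l3 [/= [-> el] vl2]]]]].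
  by exists [::], v, l2, l3; rewrite el cat_rcons.
by exists (rcons l1 v), v, l2, l3; rewrite el last_rcons !cat_rcons.
Qed.

Lemma path_weight_le_mxstar a l : sle (path_weight a l) (mxstar M a (last a l)).
Proof.
have [N] := ubnP (size l); elim: N a l => // N IH a l lN.
case: (ltnP (size l) n) => ln.
  apply: sle_trans (path_weight_le_mxpow a l) _.
  exact: (sle_bigT (fun p : 'I_n => mxpow M p a (last a l)) (Ordinal ln)).
have [l1 [v [l2 [l3 [el l1v vl2]]]]] := long_path_has_cycle a ln; subst l.
apply: sle_trans (path_weight_drop_cycle l3 l1v vl2) _.
have -> : last a (l1 ++ rcons l2 v ++ l3) = last a (l1 ++ l3).
  by rewrite !last_cat l1v last_rcons.
apply: IH; move: lN; rewrite !size_cat size_rcons; lia.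
Qed.

Lemma mxstar_path_step i k j (p : 'I_n) :
  sle (smul (M i k) (mxpow M p k j)) (mxstar M i j).
Proof.
have [-> | [l [_ lj ->]]] := mxpow_path p k j; first by rewrite smul0r; apply: sle0x.
by have := path_weight_le_mxstar i (k :: l); rewrite /= lj.
Qed.

End PathWeights.

Section KleeneStar.
Variables (n : nat) (M : mat X n).
Hypothesis n_gt0 : 0 < n.

Definition subeigen (x : vec X n) := forall l k, sle (smul (M l k) (x k)) (x l).

Lemma mxpow_subeigen x : subeigen x -> forall p i k, sle (smul (mxpow M p i k) (x k)) (x i).
Proof.
move=> xsub; elim=> [|p IH] i k.
  rewrite /mxpow /= /mxid; case: eqP => [-> | _]; rewrite ?smul1 ?smul0.
    exact: sle_refl.
  exact: sle0x.
rewrite mxpowS /mxmul big_smull; apply: big_sle => l _.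
by rewrite -smulA; apply: sle_trans (sle_mul2l _ (xsub l k)) (IH i l).
Qed.

Lemma mxstar_fix_subeigen x : subeigen x -> forall i, mxvmul (mxstar M) x i = x i.
Proof.
move=> xsub i; apply: sle_anti.
  apply: big_sle => k _; rewrite /mxstar big_smull; apply: big_sle => p _.
  exact: mxpow_subeigen.
apply: sle_trans (sle_bigT (fun k => smul (mxstar M i k) (x k)) i).
apply: sle_trans (sle_mul2r (x i) (sle_bigT (fun p : 'I_n => mxpow M p i i) (Ordinal n_gt0))).
by rewrite /mxpow /= /mxid eqxx smul1; apply: sle_refl.
Qed.

Lemma mxstar_subeigen :
  (forall k (s : {ffun 'I_k -> 'I_n}), 0 < k -> k <= n -> sle (cycle_prod M s) 1s) ->
  forall u, subeigen (mxvmul (mxstar M) u).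
Proof.
move=> cycles_le1 u l k; rewrite /mxvmul big_smulr; apply: big_sle => j _.
rewrite smulA; apply: sle_trans (sle_bigT (fun j => smul (mxstar M l j) (u j)) j).
apply: sle_mul2r; rewrite /mxstar big_smulr; apply: big_sle => p _.
exact: mxstar_path_step.
Qed.

Lemma mxstar_regular : (forall i j, M i j <> 0s) ->
  forall u, vec_nonzero u -> regular (mxvmul (mxstar M) u).
Proof.
move=> M_neq0 u u_neq0 i.
have [k uk] : exists k, u k <> 0s.
  by apply: NNPP => no_k; apply: u_neq0 => k; apply: NNPP => uk; apply: no_k; exists k.
apply: (sle_neq0 (sle_bigT (fun k => smul (mxstar M i k) (u k)) k)).
apply: smul_neq0 uk; case: (eqVneq i k) => [<- | ik].
  apply: (sle_neq0 (sle_bigT (fun p : 'I_n => mxpow M p i i) (Ordinal n_gt0))).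
  by rewrite /mxpow /= /mxid eqxx; apply: (@sone_neq0 X).
have n_gt1 : 1 < n.
  by move: (ltn_ord i) (ltn_ord k) ik; rewrite -val_eqE /=; lia.
apply: (sle_neq0 (sle_bigT (fun p : 'I_n => mxpow M p i k) (Ordinal n_gt1))).
apply: (sle_neq0 (sle_bigT (fun l => smul (mxid X i l) (M l k)) i)).
by rewrite /mxid eqxx smul1; apply: M_neq0.
Qed.

End KleeneStar.

Section SpectralRadius.
Variables (n : nat) (M : mat X n).

Lemma spec_rad_ge k (s : {ffun 'I_k -> 'I_n}) : 0 < k -> k <= n ->
  sle (sroot k (cycle_prod M s)) (spec_rad M).
Proof.
move=> k0 kn; rewrite /spec_rad.
apply: sle_trans (@sle_big _ _ xpredT (fun k => \big[sadd/0s]_(s : {ffun 'I_k -> 'I_n})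
  sroot k (cycle_prod M s)) k _ isT); last by rewrite mem_index_iota k0 ltnS.
exact: (sle_bigT (fun s : {ffun 'I_k -> 'I_n} => sroot k (cycle_prod M s))).
Qed.

Lemma spec_rad_neq0 : 0 < n -> (forall i, M i i <> 0s) -> spec_rad M <> 0s.
Proof.
move=> n_gt0 diag_neq0; pose i0 := Ordinal n_gt0.
have := @spec_rad_ge 1 [ffun _ => i0] isT n_gt0.
rewrite /cycle_prod big_ord1 !ffunE.
have := sroot_spec (M i0 i0) (isT : 0 < 1); rewrite /= smul1r => ->.
by move/sle_neq0; apply.
Qed.

Lemma cycle_prod_scale k (c : X) (s : {ffun 'I_k -> 'I_n}) :
  cycle_prod (mxscale c M) s = smul (spow c k) (cycle_prod M s).
Proof. by rewrite /cycle_prod /mxscale big_split /= big_const_ord. Qed.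

Lemma cycle_prod_scale_le1 k (s : {ffun 'I_k -> 'I_n}) :
  spec_rad M <> 0s -> 0 < k -> k <= n ->
  sle (cycle_prod (mxscale (sinv (spec_rad M)) M) s) 1s.
Proof.
move=> mu0 k0 kn; rewrite cycle_prod_scale -(sroot_spec (cycle_prod M s) k0) -/(spow _ _).
apply: sle_trans (sle_mul2l _ (sle_spow k (spec_rad_ge s k0 kn))) _.
by rewrite -spowM smulVl // spow1; apply: sle_refl.
Qed.

End SpectralRadius.

Section Form.
Variable n : nat.

Definition qform (M : mat X n) (x : vec X n) : X :=
  \big[sadd/0s]_(i < n) \big[sadd/0s]_(k < n) smul (smul (sinv (x i)) (M i k)) (x k).

Lemma mxdist_outer_conj (M : mat X n) x :
  reciprocal M -> mxdist M (outer_conj x) = qform M x.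
Proof.
move=> Mrec; rewrite /mxdist /mxtr /mxmul /mxconj /outer_conj.
have -> : \big[sadd/0s]_(i < n) \big[sadd/0s]_(k < n)
    smul (sinv (smul (x k) (sinv (x i)))) (M k i) = qform M x.
  rewrite /qform exchange_big; apply: eq_bigr => k _; apply: eq_bigr => i _.
  by rewrite sinvM sinvK smulAC.
have -> : \big[sadd/0s]_(i < n) \big[sadd/0s]_(k < n)
    smul (sinv (M k i)) (smul (x k) (sinv (x i))) = qform M x.
  apply: eq_bigr => i _; apply: eq_bigr => k _.
  by rewrite [sinv _]Mrec smulA (smulC (sinv (x i))) smulAC.
exact: saddxx.
Qed.

Lemma qform_lincomb m (A : 'I_m -> mat X n) (w : 'I_m -> X) x :
  \big[sadd/0s]_(l < m) smul (w l) (qform (A l) x) =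
  qform (fun i j => \big[sadd/0s]_(l < m) smul (w l) (A l i j)) x.
Proof.
under eq_bigr => l _ do rewrite /qform big_smulr.
rewrite exchange_big; apply: eq_bigr => i _.
under eq_bigr => l _ do rewrite big_smulr.
rewrite exchange_big; apply: eq_bigr => k _.
rewrite big_smulr big_smull; apply: eq_bigr => l _.
by rewrite -smulA smulCA !smulA.
Qed.

Lemma qform_term_le (M : mat X n) x i k :
  sle (smul (smul (sinv (x i)) (M i k)) (x k)) (qform M x).
Proof.
apply: sle_trans (sle_bigT (fun i => \big[sadd/0s]_(k < n)
  smul (smul (sinv (x i)) (M i k)) (x k)) i).
exact: (sle_bigT (fun k => smul (smul (sinv (x i)) (M i k)) (x k)) k).
Qed.

Lemma entry_le_qform (M : mat X n) x i j : regular x ->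
  sle (M i j) (smul (smul (x i) (sinv (x j))) (qform M x)).
Proof.
move=> xreg; have := sle_mul2l (smul (x i) (sinv (x j))) (qform_term_le M x i j).
congr sle; rewrite -!smulA (smulCA (sinv (x j))) (smulCA (sinv (x j))).
by rewrite (smulVl (xreg j)) smul1r smulA (smulV (xreg i)) smul1.
Qed.

(* Multiplying the bounds of [entry_le_qform] around a cycle, the [x]'s cancel. *)
Lemma spec_rad_le_qform (M : mat X n) x : regular x -> sle (spec_rad M) (qform M x).
Proof.
move=> xreg; set q := qform M x.
apply: sle_big_seq => k; rewrite mem_index_iota => /andP[k0 _] _.
apply: big_sle => s _; apply: (spow_sle_cancel k0).
rewrite /spow sroot_spec // -/(spow q k) /cycle_prod.
apply: sle_trans (@prod_sle2 _ (index_enum 'I_k) xpredT _ _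
  (fun j _ => entry_le_qform M (s j) (s (ordS j)) xreg)) _.
rewrite big_split /= big_const_ord -/(spow q k) big_split /=.
rewrite -(reindex_inj (h := @ordS k) (P := xpredT)
  (F := fun j => sinv (x (s j))) (@ordS_inj k)) /= -big_split /=.
rewrite big1 ?smul1 => [|j _]; [exact: sle_refl | exact: smulV].
Qed.

Lemma qform_le_subeigen (M : mat X n) x c : regular x -> c <> 0s ->
  sle (qform M x) c <-> subeigen (mxscale (sinv c) M) x.
Proof.
move=> xreg c0; split=> [qc l k | xsub].
  have := sle_mul2l (smul (x l) (sinv c)) (sle_trans (qform_term_le M x l k) qc).
  rewrite [t in sle _ t]smulAC -[t in sle _ t]smulA smulV // smul1r; congr sle.
  by rewrite /mxscale -!smulA (smulCA (x l)) (smulA (x l)) (smulV (xreg l)) smul1.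
apply: big_sle => l _; apply: big_sle => k _.
have := sle_mul2l (smul c (sinv (x l))) (xsub l k).
rewrite [t in sle _ t]smulAC -[t in sle _ t]smulA smulV // smul1r; congr sle.
by rewrite /mxscale -!smulA (smulCA c) (smulA c) (smulV c0) smul1.
Qed.

End Form.

Theorem qform_min n (M : mat X n) : 0 < n -> (forall i j, M i j <> 0s) ->
  let mu := spec_rad M in
  ((exists x, regular x /\ qform M x = mu) /\
   (forall x, regular x -> sle mu (qform M x))) /\
  (forall x, regular x /\ qform M x = mu <->
     exists u, vec_nonzero u /\ forall i, x i = mxvmul (mxstar (mxscale (sinv mu) M)) u i).
Proof.
move=> n_gt0 M_neq0 mu.
have mu_neq0 : mu <> 0s by apply: spec_rad_neq0.
set Mmu := mxscale (sinv mu) M.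
have Mmu_neq0 : forall i j, Mmu i j <> 0s.
  by move=> i j; apply: smul_neq0; [apply: sinv_neq0 | apply: M_neq0].
have star_opt x : (exists u, vec_nonzero u /\ forall i, x i = mxvmul (mxstar Mmu) u i) ->
    regular x /\ qform M x = mu.
  case=> u [u_neq0 xE].
  have xreg : regular x by move=> i; rewrite xE; apply: mxstar_regular.
  split=> //; apply: sle_anti; last exact: spec_rad_le_qform.
  apply/(qform_le_subeigen _ xreg mu_neq0) => l k; rewrite !xE.
  by apply: mxstar_subeigen => k' s; apply: cycle_prod_scale_le1.
split; first split.
- exists (mxvmul (mxstar Mmu) (fun _ => 1s)); apply: star_opt.
  exists (fun _ => 1s); split=> // one0; exact: sone_neq0 (one0 (Ordinal n_gt0)).
- exact: spec_rad_le_qform.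
move=> x; split=> [[xreg xopt] | ]; last exact: star_opt.
have xsub : subeigen Mmu x.
  by apply/(qform_le_subeigen _ xreg mu_neq0); rewrite xopt; apply: sle_refl.
exists x; split=> [x0 | i]; first exact: xreg _ (x0 (Ordinal n_gt0)).
by rewrite mxstar_fix_subeigen.
Qed.

End Semifield.

Theorem corollary3 (X : idem_semifield) (n m : nat) (Hn : 0 < n)
  (A : 'I_m -> mat X n) (w : 'I_m -> X)
  (HA : forall l, reciprocal (A l)) :
  let B : mat X n := fun i j => \big[@sadd X/szero X]_(l < m) smul (w l) (A l i j) in
  let mu := spec_rad B in
  let Bmu : mat X n := mxscale (sinv mu) B in
  let obj (x : vec X n) : X :=
    \big[@sadd X/szero X]_(l < m) smul (w l) (mxdist (A l) (outer_conj x)) in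
  (forall i j, B i j <> szero X) ->
  ((exists x : vec X n, regular x /\ obj x = mu) /\
   (forall x : vec X n, regular x -> sle mu (obj x))) /\
  (forall x : vec X n,
     (regular x /\ obj x = mu) <->
     (exists u : vec X n, vec_nonzero u /\ forall i, x i = mxvmul (mxstar Bmu) u i)).
Proof.
move=> B mu Bmu obj B_neq0.
have objE x : obj x = qform B x.
  by rewrite -qform_lincomb; apply: eq_bigr => l _; rewrite mxdist_outer_conj.
have [[[x0 x0opt] mu_le] optE] := qform_min Hn B_neq0.
split; first split.
- by exists x0; rewrite objE.
- by move=> x; rewrite objE; apply: mu_le.
- by move=> x; rewrite objE; apply: optE.
Qed.
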